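(* Let $k\ge 2$ be an integer. If $G$ is a $(k+1)$-regular graph having a $k$-conversion set of size $k$, then the order of $G$ is at most $2k+2$. Moreover, for every $k\ge 2$ there exists a $(k+1)$-regular graph of order $2k+2$ which has a $k$-conversion set of size $k$.
   Context: For a graph $G=(V,E)$, a positive integer $k$ and a set $S_0\subseteq V$, the irreversible $k$-threshold conversion process is defined by: for $t=1,2,\dots$, $S_t$ is obtained from $S_{t-1}$ by adjoining all vertices having at least $k$ neighbours in $S_{t-1}$. The set $S_0$ is a $k$-conversion set of $G$ if $S_t=V(G)$ for some $t\ge 0$. *)

From mathcomp Require Import all_boot.
Set Implicit Arguments. Unset Strict Implicit. Unset Printing Implicit Defensive.

Definition simple_graph (T : finType) (e : rel T) : Prop :=
  symmetric e /\ irreflexive e.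

Definition nbhd (T : finType) (e : rel T) (v : T) : {set T} := [set u | e v u].

Definition regular (T : finType) (e : rel T) (r : nat) : Prop :=
  forall v : T, #|nbhd e v| = r.

Definition conv_step (T : finType) (e : rel T) (k : nat) (S : {set T}) : {set T} :=
  S :|: [set v | k <= #|nbhd e v :&: S|].

Definition conv_iter (T : finType) (e : rel T) (k : nat) (t : nat) (S0 : {set T}) : {set T} :=
  iter t (conv_step e k) S0.

Definition conversion_set (T : finType) (e : rel T) (k : nat) (S0 : {set T}) : Prop :=
  exists t : nat, conv_iter e k t S0 = [set: T].

From mathcomp Require Import all_boot zify.

Set Implicit Arguments.
Unset Strict Implicit.
Unset Printing Implicit Defensive.

(* Order the vertices by the time at which they join the conversion process,
   breaking ties arbitrarily, and count edges from their later endpoint. Each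
   of the n - k vertices outside the seed set has at least k earlier
   neighbours, and the last vertex has all of its k + 1 neighbours earlier, so
   the n (k + 1) / 2 edges number at least k (n - k) + 1. For k >= 2 this
   forces n <= 2k + 2. Equality is attained by K_{k+1,k+1} with k seeds on one
   side: the other side converts at once, and then the last vertex of the
   seed side. *)

Section LowerNeighbourhood.
Variables (T : finType) (e : rel T) (rank : T -> nat).
Hypotheses (e_simple : simple_graph e) (rank_inj : injective rank).

Definition lower_nbhd (v : T) : {set T} := [set u in nbhd e v | rank u < rank v].

Lemma card_nbhd_split v :
  #|nbhd e v| = #|lower_nbhd v| + #|[set u in nbhd e v | rank v < rank u]|.
Proof.
rewrite -(cardsID [set u | rank u < rank v] (nbhd e v)).
have -> : nbhd e v :&: [set u | rank u < rank v] = lower_nbhd v.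
  by apply/setP => u; rewrite !inE.
have -> // : nbhd e v :\: [set u | rank u < rank v] =
              [set u in nbhd e v | rank v < rank u].
apply/setP => u; rewrite !inE andbC; case: (boolP (e v u)) => //= evu.
have neq_uv : rank u != rank v.
  by apply: contraTneq evu => /rank_inj ->; rewrite (proj2 e_simple).
by rewrite -leqNgt leq_eqVlt eq_sym (negbTE neq_uv).
Qed.

Lemma sum_card_upper_nbhd :
  \sum_v #|[set u in nbhd e v | rank v < rank u]| = \sum_v #|lower_nbhd v|.
Proof.
rewrite (eq_bigr (fun v => \sum_(u | e v u && (rank v < rank u)) 1)); last first.
  by move=> v _; rewrite -sum1_card; apply: eq_bigl => u; rewrite !inE.
rewrite (exchange_big_dep xpredT) //=; apply: eq_bigr => u _.
by rewrite -sum1_card; apply: eq_bigl => v; rewrite !inE (proj1 e_simple).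
Qed.

Lemma sum_card_nbhd : \sum_v #|nbhd e v| = 2 * \sum_v #|lower_nbhd v|.
Proof.
rewrite (eq_bigr _ (fun v _ => card_nbhd_split v)) big_split /=.
by rewrite sum_card_upper_nbhd addnn mul2n.
Qed.

Lemma lower_nbhd_rank_max m :
  (forall u, rank u <= rank m) -> lower_nbhd m = nbhd e m.
Proof.
move=> rank_max; apply/setP => u; rewrite !inE; case: (boolP (e m u)) => //= emu.
have neq_um : rank u != rank m.
  by apply: contraTneq emu => /rank_inj ->; rewrite (proj2 e_simple).
by rewrite ltn_neqAle neq_um rank_max.
Qed.

Lemma sum_card_lower_nbhd_ge (k r : nat) (S0 : {set T}) (x0 : T) :
    k <= r -> regular e r ->
    (forall v, v \notin S0 -> k <= #|lower_nbhd v|) ->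
  k * #|~: S0| + (r - k) <= \sum_v #|lower_nbhd v|.
Proof.
move=> le_kr e_reg lower_ge.
have [m _ rank_max] := @arg_maxnP T x0 xpredT rank erefl.
have lower_m : #|lower_nbhd m| = r.
  by rewrite lower_nbhd_rank_max ?e_reg // => u; exact: rank_max.
have card_out : \sum_v (v \notin S0 : nat) = #|~: S0|.
  by rewrite -sum1_card [RHS]big_mkcond; apply: eq_bigr => v _; rewrite inE.
have sum_eq_m : \sum_v (v == m : nat) = 1.
  by rewrite (bigD1 m) //= eqxx big1 // => v /negbTE ->.
suff : \sum_v (k * (v \notin S0) + (r - k) * (v == m)) <= \sum_v #|lower_nbhd v|.
  by rewrite big_split /= -!big_distrr /= card_out sum_eq_m muln1.
apply: leq_sum => v _; case: (eqVneq v m) => [->|_].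
  by rewrite lower_m; case: (m \notin S0); lia.
by case: (boolP (v \in S0)) => //= vS0; rewrite !muln0 ?muln1 ?addn0 ?lower_ge.
Qed.

End LowerNeighbourhood.

Section TieBreak.
Variable T : finType.

Definition tiebreak (f : T -> nat) (v : T) : nat := f v * #|T| + enum_rank v.

Lemma tiebreak_mono f u v : f u < f v -> tiebreak f u < tiebreak f v.
Proof.
move=> lt_fuv; have rank_u : (enum_rank u : nat) < #|T| by exact: ltn_ord.
have : (f u).+1 * #|T| <= f v * #|T| by rewrite leq_mul2r lt_fuv orbT.
rewrite /tiebreak mulSn; lia.
Qed.

Lemma tiebreak_inj f : injective (tiebreak f).
Proof.
move=> u v eq_uv; case: (ltngtP (f u) (f v)) => [lt|lt|eq_f].
- by move: (@tiebreak_mono f _ _ lt); rewrite eq_uv ltnn.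
- by move: (@tiebreak_mono f _ _ lt); rewrite eq_uv ltnn.
- by move: eq_uv; rewrite /tiebreak eq_f => /addnI/ord_inj/enum_rank_inj.
Qed.

End TieBreak.

Section ConversionTime.
Variables (T : finType) (e : rel T) (k : nat) (S0 : {set T}).
Hypothesis S0_conv : conversion_set e k S0.

Lemma conv_iter_reached v : exists t, v \in conv_iter e k t S0.
Proof. by case: S0_conv => t St; exists t; rewrite St inE. Qed.

Definition conv_time (v : T) : nat := ex_minn (conv_iter_reached v).

Lemma mem_conv_time v : v \in conv_iter e k (conv_time v) S0.
Proof. by rewrite /conv_time; case: ex_minnP. Qed.

Lemma conv_time_min v t : v \in conv_iter e k t S0 -> conv_time v <= t.
Proof. by rewrite /conv_time; case: ex_minnP => m _; apply. Qed.

Lemma earlier_nbhd_ge v :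
  v \notin S0 -> k <= #|[set u in nbhd e v | conv_time u < conv_time v]|.
Proof.
move=> vS0; have := mem_conv_time v; have := @conv_time_min v.
case: (conv_time v) => [_|t min_t]; first by rewrite /conv_iter /= (negbTE vS0).
have vSt : v \notin conv_iter e k t S0 by apply: contraTN (ltnSn t) => /min_t; lia.
rewrite /conv_iter iterS -/(conv_iter e k t S0) /conv_step in_setU (negbTE vSt).
rewrite inE => /leq_trans; apply; apply/subset_leq_card/subsetP => u.
by rewrite !inE => /andP[-> /conv_time_min]; rewrite ltnS.
Qed.

End ConversionTime.

Lemma regular_conversion_set_card_le k (T : finType) (e : rel T) (S0 : {set T}) :
    2 <= k -> simple_graph e -> regular e k.+1 ->
    #|S0| = k -> conversion_set e k S0 ->
  #|T| <= 2 * k + 2.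
Proof.
move=> k_ge2 e_simple e_reg card_S0 S0_conv.
have [x0 _|T_empty] := pickP (@predT T); last by rewrite eq_card0.
pose rank := tiebreak (conv_time S0_conv).
have lower_ge v : v \notin S0 -> k <= #|lower_nbhd e rank v|.
  move=> vS0; apply: leq_trans (earlier_nbhd_ge S0_conv vS0) _.
  apply/subset_leq_card/subsetP => u; rewrite !inE => /andP[-> earlier].
  exact: tiebreak_mono.
have rank_inj : injective rank := @tiebreak_inj _ _.
have edge_count : 2 * (k * (#|T| - k) + 1) <= #|T| * k.+1.
  rewrite -sum_nat_const (eq_bigr _ (fun v _ => esym (e_reg v))).
  rewrite (sum_card_nbhd e_simple rank_inj) leq_mul2l /= -(cardsC S0) card_S0.
  by rewrite addKn -[1](subSnn k); exact: sum_card_lower_nbhd_ge.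
(* edge_count rearranges to (k - 1) #|T| <= 2 (k - 1) (k + 1). *)
nia.
Qed.

Section CompleteBipartite.
Variable n : nat.

Definition complete_bipartite : rel (bool * 'I_n) := fun x y => x.1 != y.1.

Lemma complete_bipartite_simple : simple_graph complete_bipartite.
Proof. by split=> [x y|x]; rewrite /complete_bipartite ?eqxx // eq_sym. Qed.

Lemma nbhd_complete_bipartite x :
  nbhd complete_bipartite x = [set (~~ x.1, i) | i : 'I_n].
Proof.
apply/setP => -[b i]; rewrite !inE /complete_bipartite /=; apply/idP/imsetP.
- by move=> neq_b; exists i => //; case: (x.1) b neq_b => [] [].
- by case=> j _ [-> _]; case: (x.1).
Qed.

Lemma complete_bipartite_regular : regular complete_bipartite n.
Proof.
move=> x; rewrite nbhd_complete_bipartite card_imset ?cardsT ?card_ord //.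
by move=> i j [].
Qed.

End CompleteBipartite.

Arguments complete_bipartite : clear implicits.

Definition bipartite_seed k : {set bool * 'I_k.+1} :=
  [set (false, i) | i in [set~ ord_max]].

Lemma card_bipartite_seed k : #|bipartite_seed k| = k.
Proof. by rewrite card_imset ?cardsC1 ?card_ord // => i j []. Qed.

Lemma bipartite_seed_conversion k :
  conversion_set (complete_bipartite k.+1) k (bipartite_seed k).
Proof.
set S1 := conv_step (complete_bipartite k.+1) k (bipartite_seed k).
have S1_true i : (true, i) \in S1.
  rewrite in_setU inE; apply/orP; right.
  rewrite (setIidPr _) ?card_bipartite_seed //; apply/subsetP => y /imsetP[j _ ->].
  by rewrite inE.
exists 2; apply/eqP; rewrite eqEsubset subsetT; apply/subsetP => -[[] i] _.
  by rewrite in_setU S1_true.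
rewrite in_setU inE -/S1 (setIidPl _) ?complete_bipartite_regular ?leqnSn ?orbT //.
by apply/subsetP => y; rewrite nbhd_complete_bipartite => /imsetP[j _ ->].
Qed.

Theorem proposition3p2 :
  (forall (k : nat), 2 <= k ->
     forall (T : finType) (e : rel T),
       simple_graph e -> regular e k.+1 ->
       (exists S0 : {set T}, #|S0| = k /\ conversion_set e k S0) ->
       #|T| <= 2 * k + 2)
  /\
  (forall (k : nat), 2 <= k ->
     exists (T : finType) (e : rel T),
       [/\ simple_graph e, regular e k.+1, #|T| = 2 * k + 2 &
           exists S0 : {set T}, #|S0| = k /\ conversion_set e k S0]).
Proof.
split=> [k k_ge2 T e e_simple e_reg [S0 [card_S0 S0_conv]]|k _].
  exact: regular_conversion_set_card_le k_ge2 e_simple e_reg card_S0 S0_conv.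
exists _, (complete_bipartite k.+1); split.
- exact: complete_bipartite_simple.
- exact: complete_bipartite_regular.
- by rewrite card_prod card_bool card_ord; lia.
- exists (bipartite_seed k).
  by split; [exact: card_bipartite_seed | exact: bipartite_seed_conversion].
Qed.
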